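(* Let $H$ be a finite two-step nilpotent $p$-group ($p$ prime) whose commutator subgroup $[H,H]$ is cyclic. Then \[ m_{\mathsf{faithful}}(H)=\sqrt{[H:Z(H)]}+m_{\mathsf{faithful}}(Z(H))-1, \] where $Z(H)$ is the center of $H$.
   Context: For a finite group $G$, $m_{\mathsf{faithful}}(G)$ denotes the smallest dimension of a faithful complex representation of $G$. *)

From HB Require Import structures.
From mathcomp Require Import all_boot all_order all_algebra all_fingroup all_solvable all_field all_character.
From mathcomp Require Import pgroup nilpotent commutator center mxrepresentation.
From Stdlib Require Import ClassicalEpsilon.
Set Implicit Arguments. Unset Strict Implicit. Unset Printing Implicit Defensive.

Definition has_faithful_rep (gT : finGroupType) (G : {group gT}) (n : nat) : Prop :=
  exists rG : mx_representation algC G n, mx_faithful rG.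

Definition has_faithful_repb (gT : finGroupType) (G : {group gT}) (n : nat) : bool :=
  if excluded_middle_informative (has_faithful_rep G n) then true else false.

Lemma has_faithful_repb_P (gT : finGroupType) (G : {group gT}) n :
  reflect (has_faithful_rep G n) (has_faithful_repb G n).
Proof.
rewrite /has_faithful_repb; case: excluded_middle_informative => H.
  by constructor. by constructor.
Qed.

Lemma exists_faithful_dim (gT : finGroupType) (G : {group gT}) :
  exists n, has_faithful_repb G n.
Proof.
exists (gcard G); apply/has_faithful_repb_P.
exists (regular_repr algC G); exact: regular_mx_faithful.
Qed.

Definition m_faithful (gT : finGroupType) (G : {group gT}) : nat :=
  ex_minn (exists_faithful_dim G).

From HB Require Import structures.
From mathcomp Require Import all_boot all_order all_algebra all_fingroup all_solvable all_field all_character.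
From mathcomp Require Import pgroup nilpotent commutator center mxrepresentation.
From mathcomp Require Import zify.
From Stdlib Require PeanoNat.
Set Implicit Arguments. Unset Strict Implicit. Unset Printing Implicit Defensive.
Import Order.TTheory GRing.Theory Num.Theory.
Local Open Scope ring_scope.

(* A faithful representation of minimal dimension is a sum of distinct
   irreducible characters whose kernels meet trivially, so m_faithful is a
   minimum of sums of degrees over such sets.  Write Z = Z(H) and D = [H, H].
   Every irreducible chi of H restricts to Z as chi(1) lambda with lambda
   linear, and its kernel in Z is ker lambda.  As D is a nontrivial cyclic
   p-group, any such faithful set contains some chi0 faithful on D; then
   [Z(chi0), H] <= D :&: ker chi0 = 1 forces Z(chi0) = Z, and as H/Z(chi0)
   is abelian, chi0(1)^2 = [H : Z].
   Lower bound: the restrictions of a faithful set of H form a faithful set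
   of Z, so a minimal one has at least m_faithful Z members, chi0 among them.
   Upper bound: take a minimal faithful set of Z, necessarily of linear
   characters, containing some lambda0 faithful on D = <[g]>.  Lift lambda0
   to an irreducible chi0 of H, and twist every other lambda into
   lambda lambda0^k trivial on D; it lies under a linear character of H.  The
   common kernel of the resulting set meets Z trivially, hence is trivial
   since H is nilpotent. *)

Section FaithfulIrrSets.
Variables (gT : finGroupType) (G : {group gT}).

Definition irr_dim (i : Iirr G) : nat := irr_degree (socle_of_Iirr i).

Lemma irr1_dim i : 'chi_i 1%g = (irr_dim i)%:R.
Proof. exact: irr1_degree. Qed.

Lemma irr_dim_gt0 i : (0 < irr_dim i)%N.
Proof. by rewrite -(ltr_nat algC) -irr1_dim irr1_gt0. Qed.

Lemma irr_dim_lin i : 'chi_i \is a linear_char -> irr_dim i = 1%N.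
Proof. by move=> Li; apply/eqP; rewrite -(eqr_nat algC) -irr1_dim lin_char1. Qed.

Lemma sum_irr_dim_abelian (S : {set Iirr G}) :
  abelian G -> (\sum_(i in S) irr_dim i)%N = #|S|.
Proof.
move/char_abelianP=> linG; rewrite -sum1_card.
by apply: eq_bigr => i _; apply: irr_dim_lin.
Qed.

Lemma lin_irr_kerE (i : Iirr G) x :
  'chi_i \is a linear_char -> (x \in cfker 'chi_i) = ('chi_i x == 1).
Proof. by move=> Li; rewrite cfkerEirr inE lin_char1. Qed.

Definition faithful_irr_set (S : {set Iirr G}) : bool :=
  (G :&: \bigcap_(i in S) cfker 'chi_i \subset [1])%g.

Lemma cfker_sum_irr (S : {set Iirr G}) :
  cfker (\sum_(i in S) 'chi_i) = (G :&: \bigcap_(i in S) cfker 'chi_i)%g.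
Proof.
rewrite cfkerE ?rpred_sum // => [|i _]; last exact: irr_char.
congr (_ :&: _)%g; apply: eq_bigl => j; rewrite irr_consttE cfdot_suml.
have [jS | jS] := boolP (j \in S).
  rewrite (bigD1 j) //= cfdot_irr eqxx big1 ?addr0 ?oner_eq0 // => i /andP[_ ij].
  by rewrite cfdot_irr (negbTE ij).
rewrite big1 ?eqxx // => i iS; rewrite cfdot_irr.
by have /negbTE-> : i != j by apply: contraNneq jS => <-.
Qed.

Lemma faithful_rep_irr_set n : has_faithful_rep G n ->
  exists2 S, faithful_irr_set S & (\sum_(i in S) irr_dim i <= n)%N.
Proof.
case=> rG ffG; set phi := cfRepr rG.
have Nphi : phi \is a character by exact: cfRepr_char.
set S := [set i | i \in irr_constt phi].
have constt_phi i : (i \in irr_constt phi) = (i \in S) by rewrite /S !inE.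
exists S.
  apply: subset_trans ffG; rewrite -cfker_repr -/phi cfkerE //.
  by rewrite (eq_bigl _ _ constt_phi).
rewrite -(ler_nat algC) natr_sum -(cfRepr1 rG) -/phi {1}[phi]cfun_sum_constt.
rewrite sum_cfunE -(eq_bigl _ _ constt_phi); apply: ler_sum => i phi_i.
rewrite cfunE irr1_dim ler_peMl ?ler0n //.
move: phi_i; rewrite irr_consttE.
by case/natrP: (Cnat_cfdot_char_irr i Nphi) => m ->; rewrite pnatr_eq0 ler1n lt0n.
Qed.

Lemma faithful_irr_set_rep S :
  faithful_irr_set S -> has_faithful_rep G (\sum_(i in S) irr_dim i).
Proof.
move=> ffS; set phi := \sum_(i in S) 'chi[G]_i.
have Nphi : phi \is a character by rewrite rpred_sum // => i _; exact: irr_char.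
have [[d rG] Ephi] := char_reprP Nphi.
suff <- : d = (\sum_(i in S) irr_dim i)%N.
  by exists rG; rewrite /mx_faithful -cfker_repr -Ephi cfker_sum_irr.
apply/eqP; rewrite -(eqr_nat algC) -(cfRepr1 rG) -Ephi natr_sum sum_cfunE.
by apply/eqP/eq_bigr => i _; rewrite irr1_dim.
Qed.

Lemma m_faithful_irr_set :
  exists2 S, faithful_irr_set S & (\sum_(i in S) irr_dim i <= m_faithful G)%N.
Proof.
by apply: faithful_rep_irr_set; rewrite /m_faithful; case: ex_minnP => m /has_faithful_repb_P.
Qed.

Lemma m_faithful_le_irr_set S :
  faithful_irr_set S -> (m_faithful G <= \sum_(i in S) irr_dim i)%N.
Proof.
move/faithful_irr_set_rep/has_faithful_repb_P => ffS.
by rewrite /m_faithful; case: ex_minnP => m _; apply.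
Qed.

Lemma nil_faithful_irr_set_center (S : {set Iirr G}) : nilpotent G ->
  ('Z(G) :&: \bigcap_(i in S) cfker 'chi_i \subset [1])%g -> faithful_irr_set S.
Proof.
move=> nilG TI; rewrite /faithful_irr_set -cfker_sum_irr subG1.
apply/eqP/(TI_center_nil nilG (cfker_normal _))/trivgP.
rewrite [gval _]/= cfker_sum_irr; apply: subset_trans TI.
by apply/subsetP=> x /setIP[/setIP[_ Kx] Zx]; rewrite inE Zx.
Qed.

End FaithfulIrrSets.

Section CenterRestriction.
Variables (gT : finGroupType) (G : {group gT}).

Lemma center_sub_cfcenter_irr (i : Iirr G) : ('Z(G) \subset 'Z('chi_i)%CF)%g.
Proof. by rewrite -cap_cfcenter_irr; exact: bigcap_inf. Qed.

Lemma cfRes_center_irr (i : Iirr G) :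
  exists j : Iirr 'Z(G), 'Res['Z(G)] 'chi_i = 'chi_i 1%g *: 'chi_j.
Proof.
have [xi Lxi Exi] := cfcenter_Res 'chi_i.
have /irrP[j Ej] := lin_char_irr (cfRes_lin_char 'Z(G) Lxi).
exists j; rewrite -(cfResRes _ (center_sub_cfcenter_irr i)) ?cfcenter_sub //.
by rewrite Exi linearZ /= Ej.
Qed.

Lemma cfRes_center_irr_over (j : Iirr 'Z(G)) :
  exists i : Iirr G, 'Res['Z(G)] 'chi_i = 'chi_i 1%g *: 'chi_j.
Proof.
have [i constt_i] := neq0_has_constt (Ind_irr_neq0 j (center_sub G)).
have [k Ek] := cfRes_center_irr i; exists i; rewrite Ek.
move: constt_i; rewrite constt_Ind_Res Ek irr_consttE cfdotZl cfdot_irr mulf_eq0 negb_or.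
by rewrite irr1_neq0 pnatr_eq0 eqb0 negbK => /eqP->.
Qed.

Lemma cfker_center_irr (i : Iirr G) (j : Iirr 'Z(G)) x :
  'Res['Z(G)] 'chi_i = 'chi_i 1%g *: 'chi_j -> x \in 'Z(G)%g ->
  (x \in cfker 'chi_i) = (x \in cfker 'chi_j).
Proof.
move=> Ei Zx; rewrite -(cfker_scale_nz 'chi_j (irr1_neq0 i)) -Ei.
by rewrite cfker_Res ?center_sub ?irr_char // in_setI Zx.
Qed.

Lemma cfcenter_irr_sub_center (i : Iirr G) :
  ([~: G, G] :&: cfker 'chi_i \subset [1])%g -> ('Z('chi_i)%CF \subset 'Z(G))%g.
Proof.
move=> TI; apply/subsetP=> x Zx; set K := cfker 'chi_i.
have Gx : x \in G := subsetP (cfcenter_sub _) x Zx.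
have nKG : (G \subset 'N(K))%g := cfker_norm _.
have /centerP[_ cKx] := subsetP (cfcenter_subset_center 'chi_i) _ (mem_quotient K Zx).
apply/centerP; split=> // y Gy; apply/commgP.
suff Kxy : [~ x, y]%g \in ([~: G, G] :&: K)%g by have := subsetP TI _ Kxy; rewrite inE.
rewrite inE mem_commg //=; apply: coset_idr; first by rewrite groupR // (subsetP nKG).
rewrite (morphR _ (subsetP nKG x Gx) (subsetP nKG y Gy)); apply/eqP/commgP.
by rewrite /commute cKx // mem_quotient.
Qed.

End CenterRestriction.

Section CyclicPGroup.
Variable gT : finGroupType.

(* Every kernel meeting C contains the unique subgroup of order p of C. *)
Lemma faithful_irr_set_cyclic_TI (G C : {group gT}) (p : nat) (S : {set Iirr G}) :
  (p.-group C)%g -> cyclic C -> C != 1%g :> {set gT} -> (C \subset G)%g ->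
  faithful_irr_set S -> exists2 i, i \in S & (C :&: cfker 'chi_i \subset [1])%g.
Proof.
move=> pC cC ntC sCG ffS; have [pr_p pdC _] := pgroup_pdiv pC ntC.
have [x Cx ox] := Cauchy pr_p pdC.
apply/exists_inP; apply: contraTT ffS => /exists_inPn ntK.
apply/subsetPn; exists x; last by rewrite inE -order_eq1 ox; case: (p) pr_p => [|[]].
rewrite inE (subsetP sCG) //=; apply/bigcapP=> i /ntK ntCK.
pose D := (C :&: cfker_group 'chi_i)%G.
have ntD : D != 1%g :> {set gT} by rewrite -subG1.
have [_ pdD _] := pgroup_pdiv (pgroupS (subsetIl _ _) pC) ntD.
have [y /setIP[Cy Ky] oy] := Cauchy pr_p pdD.
have /eqP xy : <[x]>%g == <[y]>%g.
  by rewrite (eq_subG_cyclic cC) ?cycle_subG // -!orderE ox oy.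
by rewrite -cycle_subG xy cycle_subG.
Qed.

Lemma lin_char_prim_root (G : {group gT}) (xi : 'CF(G)) g :
  xi \is a linear_char -> g \in G -> (<[g]> :&: cfker xi \subset [1])%g ->
  #[g]%g.-primitive_root (xi g).
Proof.
move=> Lxi Gg TI.
have [m pm dm] := prim_order_exists (order_gt0 g) (lin_char_unity_root Lxi Gg).
suff -> : #[g]%g = m by [].
apply/eqP; rewrite eqn_dvd dm andbT order_dvdn.
have : (g ^+ m)%g \in (<[g]> :&: cfker xi)%g.
  rewrite inE mem_cycle cfkerEchar ?lin_charW // inE groupX //=.
  by rewrite lin_charX // (prim_expr_order pm) lin_char1.
by move/(subsetP TI); rewrite inE.
Qed.

Lemma lin_char_cancel_cycle (G : {group gT}) (xi0 xi : 'CF(G)) g :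
  xi0 \is a linear_char -> xi \is a linear_char -> g \in G ->
  (<[g]> :&: cfker xi0 \subset [1])%g ->
  exists k, {in <[g]>%g, forall x, xi x * xi0 x ^+ k = 1}.
Proof.
move=> L0 L Gg TI; have pr := lin_char_prim_root L0 Gg TI.
have [[i lt_i_g] Ei] := prim_rootP pr (lin_char_unity_root L Gg).
exists (#[g]%g - i)%N => _ /cycleP[m ->].
rewrite !lin_charX ?(subsetP (cycle_subG g)) // Ei /=.
rewrite -!exprM -exprD [(i * m)%N]mulnC -mulnDr subnKC ?(ltnW lt_i_g) //.
by rewrite mulnC exprM (prim_expr_order pr) expr1n.
Qed.

End CyclicPGroup.

Section CentralDerived.
Variables (gT : finGroupType) (H : {group gT}).
Hypothesis sDZ : ([~: H, H] \subset 'Z(H))%g.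

Lemma irr_dim_sq (i : Iirr H) : (irr_dim i ^ 2)%N = #|H : 'Z('chi_i)%CF|%g.
Proof.
apply/eqP; rewrite -(eqr_nat algC) natrX -irr1_dim irr1_abelian_bound //.
by apply: sub_der1_abelian; rewrite derg1 (subset_trans sDZ) ?center_sub_cfcenter_irr.
Qed.

Lemma irr_dim_le_sqrt (i : Iirr H) : (irr_dim i <= Nat.sqrt #|H : 'Z(H)|%g)%N.
Proof.
apply/ssrnat.leP/PeanoNat.Nat.sqrt_le_square/ssrnat.leP.
rewrite -/(muln _ _) mulnn irr_dim_sq dvdn_leq ?indexg_gt0 //.
exact: indexgS (center_sub_cfcenter_irr i).
Qed.

Lemma irr_dim_eq_sqrt (i : Iirr H) :
  ([~: H, H] :&: cfker 'chi_i \subset [1])%g -> irr_dim i = Nat.sqrt #|H : 'Z(H)|%g.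
Proof.
move=> TI; have <- : 'Z('chi_i)%CF = 'Z(H)%g.
  by apply/eqP; rewrite eqEsubset center_sub_cfcenter_irr cfcenter_irr_sub_center.
by rewrite -irr_dim_sq -mulnn PeanoNat.Nat.sqrt_square.
Qed.

End CentralDerived.

Lemma leq_sum_setU1 (I : finType) (x : I) (A : {set I}) (f : I -> nat) :
  (\sum_(i in x |: A) f i <= f x + \sum_(i in A) f i)%N.
Proof.
have [xA|xA] := boolP (x \in A); last by rewrite big_setU1.
by rewrite (setUidPr _) ?sub1set // leq_addl.
Qed.

Section TwoStepCyclicDerived.
Variables (gT : finGroupType) (H : {group gT}) (p : nat).
Hypotheses (pH : (p.-group H)%g) (sDZ : ([~: H, H] \subset 'Z(H))%g).
Hypotheses (cD : cyclic [~: H, H]%g) (ntD : [~: H, H]%g != 1%g :> {set gT}).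

Let pD : (p.-group [~: H, H]%G)%g := pgroupS (der1_subG H) pH.

Lemma m_faithful_two_step_ge :
  (Nat.sqrt #|H : 'Z(H)|%g + m_faithful 'Z(H)%G - 1 <= m_faithful H)%N.
Proof.
have [S ffS leS] := m_faithful_irr_set H.
have [i0 i0S TI0] := faithful_irr_set_cyclic_TI pD cD ntD (der1_subG H) ffS.
have [res resP] := fin_all_exists (@cfRes_center_irr _ H).
have ffT : faithful_irr_set [set res i | i in S].
  apply/subsetP=> x /setIP[Zx /bigcapP Kx]; apply: (subsetP ffS).
  rewrite inE (subsetP (center_sub H)) //=; apply/bigcapP=> i iS.
  by rewrite (cfker_center_irr (resP i) Zx) Kx ?imset_f.
have mZ : (m_faithful 'Z(H)%G <= #|S|)%N.
  apply: leq_trans (m_faithful_le_irr_set ffT) _.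
  by rewrite sum_irr_dim_abelian ?center_abelian // leq_imset_card.
have sumS : (irr_dim i0 + (#|S| - 1) <= \sum_(i in S) irr_dim i)%N.
  rewrite (bigD1 i0) //= leq_add2l (cardsD1 i0 S) i0S add1n subn1 -sum1_card.
  rewrite (eq_bigl (fun i => (i \in S) && (i != i0))) => [|i]; last first.
    by rewrite !inE andbC.
  exact: leq_sum (fun i _ => irr_dim_gt0 i).
rewrite -(irr_dim_eq_sqrt sDZ TI0); lia.
Qed.

(* chi_j chi_j0^k is trivial on [H, H] = <[g]>, so the irreducibles of H over
   it are linear; and chi_j0^k is 1 wherever chi_j0 is. *)
Lemma lin_irr_over_twist (j0 j : Iirr 'Z(H)) :
  ([~: H, H] :&: cfker 'chi_j0 \subset [1])%g ->
  exists i : Iirr H, 'chi_i \is a linear_char /\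
    {in 'Z(H)%g, forall x, x \in cfker 'chi_i -> 'chi_j0 x = 1 -> 'chi_j x = 1}.
Proof.
move=> TI0; have [g Dg] := cyclicP cD; rewrite Dg in TI0.
have linZ := char_abelianP _ (center_abelian H).
have Zg : g \in 'Z(H)%g by apply: (subsetP sDZ); rewrite Dg cycle_id.
have [k twist1] := lin_char_cancel_cycle (linZ j0) (linZ j) Zg TI0.
have Lmu : 'chi_j * 'chi_j0 ^+ k \is a linear_char by rewrite rpredM ?rpredX.
have /irrP[jm Ejm] := lin_char_irr Lmu.
have muE x : x \in 'Z(H)%g -> 'chi_jm x = 'chi_j x * 'chi_j0 x ^+ k.
  by move=> Zx; rewrite -Ejm cfunE exp_cfunE.
have [i Ei] := cfRes_center_irr_over jm.
have kerZi x : x \in 'Z(H)%g -> (x \in cfker 'chi_i) = ('chi_jm x == 1).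
  by move=> Zx; rewrite (cfker_center_irr Ei Zx) lin_irr_kerE ?linZ.
exists i; split.
  rewrite lin_irr_der1 derg1 Dg cycle_subG.
  by rewrite kerZi // muE // twist1 ?cycle_id.
move=> x Zx; rewrite kerZi // muE // => /eqP mu1 l1.
by rewrite l1 expr1n mulr1 in mu1.
Qed.

Lemma m_faithful_two_step_le :
  (m_faithful H <= Nat.sqrt #|H : 'Z(H)|%g + m_faithful 'Z(H)%G - 1)%N.
Proof.
have linZ := char_abelianP _ (center_abelian H).
have [SZ ffSZ leSZ] := m_faithful_irr_set 'Z(H)%G.
rewrite sum_irr_dim_abelian ?center_abelian // in leSZ.
have [j0 j0S TI0] := faithful_irr_set_cyclic_TI pD cD ntD sDZ ffSZ.
have [i0 Ei0] := cfRes_center_irr_over j0.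
have [lift liftP] := fin_all_exists (fun j => lin_irr_over_twist j TI0).
set T := i0 |: [set lift j | j in SZ :\ j0].
have ffT : faithful_irr_set T.
  apply: nil_faithful_irr_set_center (pgroup_nil pH) _.
  apply/subsetP=> x /setIP[Zx /bigcapP KTx]; apply: (subsetP ffSZ).
  have Kx0 : x \in cfker 'chi_j0.
    by rewrite -(cfker_center_irr Ei0 Zx); apply: KTx; rewrite setU11.
  rewrite inE Zx; apply/bigcapP=> j jS; have [-> // | nj] := eqVneq j j0.
  have [_ lift_ker] := liftP j.
  rewrite lin_irr_kerE ?linZ //; apply/eqP/(lift_ker x Zx).
    by apply: KTx; rewrite setU1r // imset_f // !inE nj.
  by apply/eqP; rewrite -lin_irr_kerE ?linZ.
apply: leq_trans (m_faithful_le_irr_set ffT) _.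
apply: leq_trans (leq_sum_setU1 _ _ _) _.
rewrite -addnBA; last by apply: leq_trans leSZ; apply/card_gt0P; exists j0.
apply: leq_add; first exact: irr_dim_le_sqrt.
have -> : (\sum_(i in [set lift j | j in SZ :\ j0]) irr_dim i)%N
          = #|[set lift j | j in SZ :\ j0]|.
  rewrite -sum1_card; apply: eq_bigr => _ /imsetP[j _ ->].
  by have [/irr_dim_lin] := liftP j.
apply: leq_trans (leq_imset_card _ _) _.
by move: leSZ; rewrite (cardsD1 j0 SZ) j0S add1n => /(leq_sub2r 1); rewrite subn1.
Qed.

End TwoStepCyclicDerived.

Theorem theorem1p3 (gT : finGroupType) (p : nat) (H : {group gT}) :
  prime p -> (p.-group H)%g -> (nil_class H <= 2)%N -> cyclic [~: H, H]%g ->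
  m_faithful H = (Nat.sqrt #|H : 'Z(H)|%g + m_faithful 'Z(H)%G - 1)%N.
Proof.
move=> _ pH nil2 cD.
have sDZ : ([~: H, H] \subset 'Z(H))%g by rewrite -derg1 -nil_class2.
have [abH | nabH] := boolP (abelian H).
  have ZH : 'Z(H)%G = H by apply: val_inj; exact/center_idP.
  by rewrite ZH (center_idP abH) indexgg add1n subn1.
have ntD : [~: H, H]%g != 1%g :> {set gT}.
  by apply: contraNneq nabH => D1; apply/derG1P; rewrite derg1 D1.
apply/eqP; rewrite eqn_leq.
by rewrite (m_faithful_two_step_le pH sDZ cD ntD) (m_faithful_two_step_ge pH sDZ cD ntD).
Qed.
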